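(* Let $d\ge3$ and let $X,Y\in M_d(\mathbb{C})$ be diagonal matrices. Then the matrix $H(X,Y)$ is positive semidefinite, where $H(X,Y)$ is the hermitian matrix of order $2d^2$ given by $H=H_1-\tfrac12(H_2+H_3)+\tfrac14H_4$ with $$H_1=\begin{bmatrix}\|X\|^2&\operatorname{tr}(X^\dagger Y)\\ \operatorname{tr}(Y^\dagger X)&\|Y\|^2\end{bmatrix}\otimes I_{d^2},\qquad H_2=\begin{bmatrix}X^\dagger X&X^\dagger Y\\ Y^\dagger X&Y^\dagger Y\end{bmatrix}\otimes I_d,$$ $$H_3=\begin{bmatrix}I_d\otimes X^*X^T&I_d\otimes X^*Y^T\\ I_d\otimes Y^*X^T&I_d\otimes Y^*Y^T\end{bmatrix},\qquad H_4=\begin{bmatrix}\tilde X^*\tilde X^T&\tilde X^*\tilde Y^T\\ \tilde Y^*\tilde X^T&\tilde Y^*\tilde Y^T\end{bmatrix}.$$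
   Context: $Z^*$ is the entrywise complex conjugate, $Z^T$ the transpose, $Z^\dagger$ the conjugate transpose, $\|Z\|^2=\operatorname{tr}(Z^\dagger Z)$, $I_m$ the identity matrix of order $m$, and $A\otimes B=[a_{ij}B]$ for $A=[a_{ij}]$. For a matrix $Z$, $\tilde Z$ is the column vector obtained by stacking the columns of $Z$ one below the other, starting with the first. *)

From HB Require Import structures.
From mathcomp Require Import all_boot all_order all_algebra.
From mathcomp Require Import complex mxtens.
From mathcomp Require Import reals.
Set Implicit Arguments. Unset Strict Implicit. Unset Printing Implicit Defensive.
Import Order.TTheory GRing.Theory Num.Theory.
Local Open Scope ring_scope.

Section Defs.
Variable C : numClosedFieldType.

Definition conjmx m n (Z : 'M[C]_(m, n)) : 'M[C]_(m, n) := map_mx Num.conj Z.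
Definition adjmx m n (Z : 'M[C]_(m, n)) : 'M[C]_(n, m) := (conjmx Z)^T.
Definition fnorm2 n (Z : 'M[C]_n) : C := \tr (adjmx Z *m Z).
(* tilde Z : stacking the columns of Z, first column first.
   mxvec stacks the rows (row-major), so we vectorize the transpose. *)
Definition colvec m n (Z : 'M[C]_(m, n)) : 'cV[C]_(n * m) := (mxvec Z^T)^T.

Definition psd n (A : 'M[C]_n) : Prop :=
  adjmx A = A /\ forall v : 'cV[C]_n, 0 <= (adjmx v *m A *m v) ord0 ord0.

Lemma eqH1 d : (2 * (d * d) = d * d + d * d)%N.
Proof. by rewrite mul2n addnn. Qed.
Lemma eqH2 d : ((d + d) * d = d * d + d * d)%N.
Proof. by rewrite mulnDl. Qed.

Variable d : nat.
Variables X Y : 'M[C]_d.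

Definition H1 : 'M[C]_(d * d + d * d) :=
  castmx (eqH1 d, eqH1 d)
   ((\matrix_(i < 2, j < 2)
       if (i == 0 :> nat) && (j == 0 :> nat) then fnorm2 X
       else if (i == 0 :> nat) then \tr (adjmx X *m Y)
       else if (j == 0 :> nat) then \tr (adjmx Y *m X)
       else fnorm2 Y) *t (1%:M : 'M[C]_(d * d))).

Definition H2 : 'M[C]_(d * d + d * d) :=
  castmx (eqH2 d, eqH2 d)
   (block_mx (adjmx X *m X) (adjmx X *m Y) (adjmx Y *m X) (adjmx Y *m Y)
      *t (1%:M : 'M[C]_d)).

Definition H3 : 'M[C]_(d * d + d * d) :=
  block_mx ((1%:M : 'M[C]_d) *t (conjmx X *m X^T))
           ((1%:M : 'M[C]_d) *t (conjmx X *m Y^T))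
           ((1%:M : 'M[C]_d) *t (conjmx Y *m X^T))
           ((1%:M : 'M[C]_d) *t (conjmx Y *m Y^T)).

Definition H4 : 'M[C]_(d * d + d * d) :=
  block_mx (conjmx (colvec X) *m (colvec X)^T) (conjmx (colvec X) *m (colvec Y)^T)
           (conjmx (colvec Y) *m (colvec X)^T) (conjmx (colvec Y) *m (colvec Y)^T).

Definition Hmat : 'M[C]_(d * d + d * d) :=
  H1 - 2^-1 *: (H2 + H3) + 4^-1 *: H4.
End Defs.

From Pilot Require Import Defs.
From HB Require Import structures.
From mathcomp Require Import all_boot all_order all_algebra.
From mathcomp Require Import complex mxtens.
From mathcomp Require Import reals.
From mathcomp Require Import ring.
Set Implicit Arguments. Unset Strict Implicit. Unset Printing Implicit Defensive.
Import Order.TTheory GRing.Theory Num.Theory.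
Local Open Scope ring_scope.

(* For diagonal X = diag x and Y = diag y, every block of H1 - (H2 + H3)/2 is
   diagonal in the basis e_i (x) e_k, with entry  sum_m c_m - c_i/2 - c_k/2  where
   c_m = conj(a_m) b_m for the corresponding pair (a, b) among x, y.  The quadratic
   form of this block matrix at (u, w) is therefore a sum over (i, k) of
   sum_m |x_m u + y_m w|^2 minus half of its i-th and k-th terms, which is
   nonnegative.  H4 is the Gram matrix of the row (vec X^T, vec Y^T), so it is
   positive semidefinite too. *)

Section TensorBlocks.
Variable R : pzRingType.

Lemma cast_lshift_tens_index m1 m2 p (e : ((m1 + m2) * p = m1 * p + m2 * p)%N)
    (a : 'I_m1) (b : 'I_p) :
  cast_ord (esym e) (lshift _ (mxtens_index (a, b))) = mxtens_index (lshift m2 a, b).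
Proof. exact: val_inj. Qed.

Lemma cast_rshift_tens_index m1 m2 p (e : ((m1 + m2) * p = m1 * p + m2 * p)%N)
    (a : 'I_m2) (b : 'I_p) :
  cast_ord (esym e) (rshift _ (mxtens_index (a, b))) = mxtens_index (rshift m1 a, b).
Proof. by apply: val_inj; rewrite /= mulnDl addnA. Qed.

Lemma tens_block_mx_cast m1 m2 n1 n2 p q
    (er : ((m1 + m2) * p = m1 * p + m2 * p)%N) (ec : ((n1 + n2) * q = n1 * q + n2 * q)%N)
    (A : 'M[R]_(m1, n1)) (B : 'M[R]_(m1, n2)) (C : 'M[R]_(m2, n1)) (D : 'M[R]_(m2, n2))
    (N : 'M[R]_(p, q)) :
  castmx (er, ec) (block_mx A B C D *t N) = block_mx (A *t N) (B *t N) (C *t N) (D *t N).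
Proof.
apply/matrixP=> i j; rewrite castmxE -(splitK i) -(splitK j).
case: (split i) => i'; case: (split j) => j';
  case: (mxtens_indexP i') => a b; case: (mxtens_indexP j') => c e;
  by rewrite ?cast_lshift_tens_index ?cast_rshift_tens_index tensmxE
       ?block_mxEul ?block_mxEur ?block_mxEdl ?block_mxEdr tensmxE.
Qed.

Lemma cast_lshift_tens2_index p (e : (2 * p = p + p)%N) (b : 'I_p) :
  cast_ord (esym e) (lshift p b) = mxtens_index (ord0 : 'I_2, b).
Proof. exact: val_inj. Qed.

Lemma cast_rshift_tens2_index p (e : (2 * p = p + p)%N) (b : 'I_p) :
  cast_ord (esym e) (rshift p b) = mxtens_index (ord_max : 'I_2, b).
Proof. by apply: val_inj; rewrite /= mul1n. Qed.

Lemma tens2_mx_cast p q (er : (2 * p = p + p)%N) (ec : (2 * q = q + q)%N)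
    (M : 'M[R]_2) (N : 'M[R]_(p, q)) :
  castmx (er, ec) (M *t N) =
  block_mx (M ord0 ord0 *: N) (M ord0 ord_max *: N)
           (M ord_max ord0 *: N) (M ord_max ord_max *: N).
Proof.
apply/matrixP=> i j; rewrite castmxE -(splitK i) -(splitK j).
case: (split i) => i'; case: (split j) => j';
  by rewrite ?cast_lshift_tens2_index ?cast_rshift_tens2_index tensmxE
       ?block_mxEul ?block_mxEur ?block_mxEdl ?block_mxEdr mxE.
Qed.

Lemma tens_diag_mx m n (r : 'rV[R]_m) (s : 'rV[R]_n) :
  diag_mx r *t diag_mx s =
  diag_mx (\row_p (r 0 (mxtens_unindex p).1 * s 0 (mxtens_unindex p).2)).
Proof.
apply/matrixP=> p q.
case: (mxtens_indexP p) => i k; case: (mxtens_indexP q) => j l.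
rewrite tensmxE !mxE !mxtens_indexK (can_eq (@mxtens_indexK _ _)) xpair_eqE /=.
by rewrite mulrnAl mulrnAr -mulrnA mulnC mulnb.
Qed.

End TensorBlocks.

Section Adjoint.
Variable C : numClosedFieldType.

Lemma adjmxK m n (A : 'M[C]_(m, n)) : adjmx (adjmx A) = A.
Proof. by apply/matrixP=> i j; rewrite !mxE conjCK. Qed.

Lemma adjmxM m n p (A : 'M[C]_(m, n)) (B : 'M[C]_(n, p)) :
  adjmx (A *m B) = adjmx B *m adjmx A.
Proof.
apply/matrixP=> i j; rewrite !mxE rmorph_sum; apply: eq_bigr => k _.
by rewrite !mxE rmorphM mulrC.
Qed.

Lemma adjmxD m n (A B : 'M[C]_(m, n)) : adjmx (A + B) = adjmx A + adjmx B.
Proof. by apply/matrixP=> i j; rewrite !mxE rmorphD. Qed.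

Lemma adjmxZ m n c (A : 'M[C]_(m, n)) : adjmx (c *: A) = c^* *: adjmx A.
Proof. by apply/matrixP=> i j; rewrite !mxE rmorphM. Qed.

Lemma adjmx_block m1 m2 n1 n2 (A : 'M[C]_(m1, n1)) (B : 'M[C]_(m1, n2))
    (D : 'M[C]_(m2, n1)) (E : 'M[C]_(m2, n2)) :
  adjmx (block_mx A B D E) = block_mx (adjmx A) (adjmx D) (adjmx B) (adjmx E).
Proof. by rewrite /adjmx /Defs.conjmx map_block_mx tr_block_mx. Qed.

Lemma adjmx_col m1 m2 n (A : 'M[C]_(m1, n)) (B : 'M[C]_(m2, n)) :
  adjmx (col_mx A B) = row_mx (adjmx A) (adjmx B).
Proof. by rewrite /adjmx /Defs.conjmx map_col_mx tr_col_mx. Qed.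

Lemma adjmx_row m n1 n2 (A : 'M[C]_(m, n1)) (B : 'M[C]_(m, n2)) :
  adjmx (row_mx A B) = col_mx (adjmx A) (adjmx B).
Proof. by rewrite /adjmx /Defs.conjmx map_row_mx tr_row_mx. Qed.

Lemma adjmx_tr m n (A : 'M[C]_(m, n)) : adjmx A^T = Defs.conjmx A.
Proof. by rewrite /adjmx /Defs.conjmx map_trmx trmxK. Qed.

Lemma conjmx_diag n (r : 'rV[C]_n) : Defs.conjmx (diag_mx r) = diag_mx (Defs.conjmx r).
Proof. exact: map_diag_mx. Qed.

Lemma adjmx_diag n (r : 'rV[C]_n) : adjmx (diag_mx r) = diag_mx (Defs.conjmx r).
Proof. by rewrite /adjmx conjmx_diag tr_diag_mx. Qed.

Lemma adjmx_diag_form n (r : 'rV[C]_n) (z w : 'cV[C]_n) :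
  (adjmx z *m diag_mx r *m w) 0 0 = \sum_p (z p 0)^* * r 0 p * w p 0.
Proof.
by rewrite mul_mx_diag mxE; apply: eq_bigr => p _; rewrite !mxE.
Qed.

Lemma psdD n (A B : 'M[C]_n) : psd A -> psd B -> psd (A + B).
Proof.
move=> [hA qA] [hB qB]; split; first by rewrite adjmxD hA hB.
by move=> v; rewrite mulmxDr mulmxDl mxE addr_ge0.
Qed.

Lemma psdZ n c (A : 'M[C]_n) : 0 <= c -> psd A -> psd (c *: A).
Proof.
move=> c0 [hA qA]; split; first by rewrite adjmxZ hA geC0_conj.
by move=> v; rewrite -scalemxAr -scalemxAl mxE mulr_ge0.
Qed.

Lemma psd_gram n (w : 'rV[C]_n) : psd (adjmx w *m w).
Proof.
split; first by rewrite adjmxM adjmxK.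
move=> v; rewrite mulmxA -adjmxM -mulmxA mxE big_ord1 !mxE mulrC.
exact: mul_conjC_ge0.
Qed.

End Adjoint.

Definition trace_defect (R : fieldType) n (f : 'I_n -> R) (i k : 'I_n) : R :=
  \sum_m f m - 2^-1 * f i - 2^-1 * f k.

Lemma eq_trace_defect (R : fieldType) n (f g : 'I_n -> R) i k :
  f =1 g -> trace_defect f i k = trace_defect g i k.
Proof. by move=> eq_fg; rewrite /trace_defect (eq_bigr _ (fun m _ => eq_fg m)) !eq_fg. Qed.

Lemma trace_defect_ge0 (R : numFieldType) n (f : 'I_n -> R) i k :
  (forall m, 0 <= f m) -> 0 <= trace_defect f i k.
Proof.
move=> f_ge0; have sum_ge0 P : 0 <= \sum_(m | P m) f m by apply: sumr_ge0.
rewrite /trace_defect (bigD1 i) //=; have [<-|ne_ik] := eqVneq i k.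
  have -> : forall a b : R, a + b - 2^-1 * a - 2^-1 * a = b by move=> a b; field.
  exact: sum_ge0.
rewrite (bigD1 k) /=; last by rewrite eq_sym.
have -> : forall a b c : R,
    a + (b + c) - 2^-1 * a - 2^-1 * b = 2^-1 * a + 2^-1 * b + c.
  by move=> a b c; field.
by rewrite !addr_ge0 ?mulr_ge0 ?invr_ge0 ?ler0n.
Qed.

Lemma trace_defect_combine (R : fieldType) n (f1 f2 f3 f4 : 'I_n -> R)
    (a1 a2 a3 a4 b1 b2 b3 b4 : R) i k :
  a1 * trace_defect f1 i k * b1 + a2 * trace_defect f2 i k * b2
    + a3 * trace_defect f3 i k * b3 + a4 * trace_defect f4 i k * b4
  = trace_defect (fun m => a1 * f1 m * b1 + a2 * f2 m * b2
                           + a3 * f3 m * b3 + a4 * f4 m * b4) i k.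
Proof. rewrite /trace_defect !big_split /= -!mulr_suml -!mulr_sumr; ring. Qed.

Definition trace_defect_mx (R : fieldType) n (f : 'I_n -> R) : 'M[R]_(n * n) :=
  diag_mx (\row_p trace_defect f (mxtens_unindex p).1 (mxtens_unindex p).2).

Section DiagonalBlocks.
Variable C : numClosedFieldType.
Variable n : nat.

Definition conj_dot (u v : 'rV[C]_n) (m : 'I_n) : C := (u 0 m)^* * v 0 m.

Lemma adjmx_mul_diag (u v : 'rV[C]_n) :
  adjmx (diag_mx u) *m diag_mx v = diag_mx (\row_m conj_dot u v m).
Proof.
by rewrite adjmx_diag mulmx_diag; congr diag_mx; apply/rowP => m; rewrite !mxE.
Qed.

Lemma conjmx_mul_tr_diag (u v : 'rV[C]_n) :
  Defs.conjmx (diag_mx u) *m (diag_mx v)^T = diag_mx (\row_m conj_dot u v m).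
Proof. by rewrite tr_diag_mx conjmx_diag -adjmx_diag adjmx_mul_diag. Qed.

Lemma scalar_sub_tens_diag (u v : 'rV[C]_n) :
  (\tr (adjmx (diag_mx u) *m diag_mx v))%:M
    - 2^-1 *: ((adjmx (diag_mx u) *m diag_mx v) *t 1%:M
               + 1%:M *t (Defs.conjmx (diag_mx u) *m (diag_mx v)^T))
  = trace_defect_mx (conj_dot u v).
Proof.
have diag1 : (1%:M : 'M[C]_n) = diag_mx (const_mx 1) by rewrite diag_const_mx.
rewrite conjmx_mul_tr_diag adjmx_mul_diag mxtrace_diag diag1 !tens_diag_mx.
apply/matrixP => p q; rewrite !mxE.
have [_|_] := eqVneq p q; rewrite ?mulr1n ?mulr0n /trace_defect.
  by under eq_bigr do rewrite mxE; ring.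
by rewrite addr0 mulr0 subr0.
Qed.

Lemma conj_dotC (u v : 'rV[C]_n) m : (conj_dot u v m)^* = conj_dot v u m.
Proof. by rewrite /conj_dot rmorphM [_ (_ ^*)]conjCK mulrC. Qed.

Lemma conj_trace_defect (f : 'I_n -> C) i k :
  (trace_defect f i k)^* = trace_defect (fun m => (f m)^*) i k.
Proof.
have conj_half : (2^-1 : C)^* = 2^-1 by rewrite geC0_conj // invr_ge0 ler0n.
by rewrite /trace_defect !rmorphB rmorph_sum !rmorphM [_ 2^-1]conj_half.
Qed.

Lemma adjmx_trace_defect_mx (u v : 'rV[C]_n) :
  adjmx (trace_defect_mx (conj_dot u v)) = trace_defect_mx (conj_dot v u).
Proof.
rewrite adjmx_diag; congr diag_mx; apply/rowP => p.
by rewrite !mxE conj_trace_defect; apply: eq_trace_defect => m; rewrite conj_dotC.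
Qed.

Lemma psd_trace_defect_block (u v : 'rV[C]_n) :
  psd (block_mx (trace_defect_mx (conj_dot u u)) (trace_defect_mx (conj_dot u v))
                (trace_defect_mx (conj_dot v u)) (trace_defect_mx (conj_dot v v))).
Proof.
split; first by rewrite adjmx_block !adjmx_trace_defect_mx.
move=> w; have addE k l (A B : 'M[C]_(k, l)) i j : (A + B) i j = A i j + B i j.
  by rewrite mxE.
rewrite -(vsubmxK w) adjmx_col mul_row_block mul_row_col !mulmxDl.
rewrite !addE !adjmx_diag_form -!big_split /=; apply: sumr_ge0 => p _.
set a := usubmx w p 0; set b := dsubmx w p 0; rewrite !mxE addrA trace_defect_combine.
apply: trace_defect_ge0 => m.
have -> : a^* * conj_dot u u m * a + b^* * conj_dot v u m * a
          + a^* * conj_dot u v m * b + b^* * conj_dot v v m * b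
        = (u 0 m * a + v 0 m * b) * (u 0 m * a + v 0 m * b)^*.
  by rewrite /conj_dot rmorphD !rmorphM; ring.
exact: mul_conjC_ge0.
Qed.

End DiagonalBlocks.

Section HBlocks.
Variable C : numClosedFieldType.
Variable d : nat.

Lemma H1_block (X Y : 'M[C]_d) :
  H1 X Y = block_mx (\tr (adjmx X *m X))%:M (\tr (adjmx X *m Y))%:M
                    (\tr (adjmx Y *m X))%:M (\tr (adjmx Y *m Y))%:M.
Proof. by rewrite /H1 tens2_mx_cast !mxE /= !scalemx1. Qed.

Lemma H2_block (X Y : 'M[C]_d) :
  H2 X Y = block_mx (adjmx X *m X *t 1%:M) (adjmx X *m Y *t 1%:M)
                    (adjmx Y *m X *t 1%:M) (adjmx Y *m Y *t 1%:M).
Proof. exact: tens_block_mx_cast. Qed.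

Lemma H4_gram (X Y : 'M[C]_d) :
  H4 X Y = adjmx (row_mx (colvec X)^T (colvec Y)^T) *m row_mx (colvec X)^T (colvec Y)^T.
Proof. by rewrite adjmx_row mul_col_row !adjmx_tr. Qed.

Lemma Hmat_diag (x y : 'rV[C]_d) :
  Hmat (diag_mx x) (diag_mx y) =
  block_mx (trace_defect_mx (conj_dot x x)) (trace_defect_mx (conj_dot x y))
           (trace_defect_mx (conj_dot y x)) (trace_defect_mx (conj_dot y y))
  + 4^-1 *: H4 (diag_mx x) (diag_mx y).
Proof.
rewrite /Hmat H1_block H2_block /H3 add_block_mx scale_block_mx opp_block_mx.
by rewrite add_block_mx !scalar_sub_tens_diag.
Qed.

End HBlocks.

Theorem corollary5p2 (R : realType) (d : nat) (hd : (3 <= d)%N)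
  (X Y : 'M[R[i]]_d) (hX : is_diag_mx X) (hY : is_diag_mx Y) :
  psd (Hmat X Y).
Proof.
have [x ->] := diag_mxP _ hX; have [y ->] := diag_mxP _ hY.
rewrite Hmat_diag; apply: psdD; first exact: psd_trace_defect_block.
by apply: psdZ; [rewrite invr_ge0 ler0n | rewrite H4_gram; apply: psd_gram].
Qed.
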